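(* Let $B\ge 1$ be an integer, $\mathcal{E}>0$, $\epsilon>0$. Let $X=\{\mathbf{i}=(i_0,\dots,i_{B-1})\in\mathbb{R}^B: i_b\ge 1+\epsilon\ \forall b\}$, $Y=\{\mathbf{t}=(t_0,\dots,t_{B-1})\in\mathbb{R}^B: t_b\ge 0\ \forall b\}$, and $S=\{(\mathbf{i},\mathbf{t})\in X\times Y: \sum_{b=0}^{B-1} i_b^2t_b\le\mathcal{E}\}$. Then the optimization problem $$\text{minimize } f(\mathbf{i},\mathbf{t})=\sum_{b=0}^{B-1}4^b\exp\bigl(-2(i_b-1)t_b\bigr)\quad\text{subject to } (\mathbf{i},\mathbf{t})\in S$$ is a biconvex problem: $S$ is a biconvex set on $X\times Y$ and $f$ is a biconvex function on $S$.
   Context: Let $X\subseteq\mathbb{R}^n$, $Y\subseteq\mathbb{R}^m$ be nonempty convex sets. A set $S\subseteq X\times Y$ is biconvex on $X\times Y$ if for every fixed $\mathbf{x}\in X$ the set $S_{\mathbf{x}}=\{\mathbf{y}\in Y:(\mathbf{x},\mathbf{y})\in S\}$ is convex, and for every fixed $\mathbf{y}\in Y$ the set $S_{\mathbf{y}}=\{\mathbf{x}\in X:(\mathbf{x},\mathbf{y})\in S\}$ is convex. A function $f:S\to\mathbb{R}$ is biconvex on $S$ if for every fixed $\mathbf{x}\in X$, $f(\mathbf{x},\cdot)$ is convex on $S_{\mathbf{x}}$, and for every fixed $\mathbf{y}\in Y$, $f(\cdot,\mathbf{y})$ is convex on $S_{\mathbf{y}}$. A problem of minimizing $f$ over $S$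 is biconvex if $S$ is biconvex on $X\times Y$ and $f$ is biconvex on $S$. *)

From HB Require Import structures.
From mathcomp Require Import all_boot all_order all_algebra.
From mathcomp Require Import all_classical all_reals all_analysis.
Set Implicit Arguments. Unset Strict Implicit. Unset Printing Implicit Defensive.
Import Order.TTheory GRing.Theory Num.Theory.
Local Open Scope ring_scope.
Local Open Scope classical_set_scope.

Section Biconvex.
Variable R : realType.

Definition ccomb (n : nat) (l : R) (x y : 'I_n -> R) : 'I_n -> R :=
  fun i => l * x i + (1 - l) * y i.

Definition convex_set_n (n : nat) (C : set ('I_n -> R)) : Prop :=
  forall x y, C x -> C y -> forall l : R, 0 <= l -> l <= 1 -> C (ccomb l x y).

Definition convex_fun_on (n : nat) (C : set ('I_n -> R)) (g : ('I_n -> R) -> R) : Prop :=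
  forall x y, C x -> C y -> forall l : R, 0 <= l -> l <= 1 ->
    g (ccomb l x y) <= l * g x + (1 - l) * g y.

Definition sec_x (n m : nat) (Y : set ('I_m -> R)) (S : set (('I_n -> R) * ('I_m -> R)))
  (x : 'I_n -> R) : set ('I_m -> R) := [set y | Y y /\ S (x, y)].
Definition sec_y (n m : nat) (X : set ('I_n -> R)) (S : set (('I_n -> R) * ('I_m -> R)))
  (y : 'I_m -> R) : set ('I_n -> R) := [set x | X x /\ S (x, y)].

Definition biconvex_set (n m : nat) (X : set ('I_n -> R)) (Y : set ('I_m -> R))
  (S : set (('I_n -> R) * ('I_m -> R))) : Prop :=
  (forall p, S p -> X p.1 /\ Y p.2) /\
  (forall x, X x -> convex_set_n (sec_x Y S x)) /\
  (forall y, Y y -> convex_set_n (sec_y X S y)).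

Definition biconvex_fun (n m : nat) (X : set ('I_n -> R)) (Y : set ('I_m -> R))
  (S : set (('I_n -> R) * ('I_m -> R))) (f : ('I_n -> R) -> ('I_m -> R) -> R) : Prop :=
  (forall x, X x -> convex_fun_on (sec_x Y S x) (f x)) /\
  (forall y, Y y -> convex_fun_on (sec_y X S y) (fun x => f x y)).

Definition biconvex_problem (n m : nat) (X : set ('I_n -> R)) (Y : set ('I_m -> R))
  (S : set (('I_n -> R) * ('I_m -> R))) (f : ('I_n -> R) -> ('I_m -> R) -> R) : Prop :=
  (X !=set0 /\ convex_set_n X) /\ (Y !=set0 /\ convex_set_n Y) /\
  biconvex_set X Y S /\ biconvex_fun X Y S f.

End Biconvex.

From HB Require Import structures.
From mathcomp Require Import all_boot all_order all_algebra.
From mathcomp Require Import all_classical all_reals all_analysis.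
From mathcomp Require Import ring lra.
Import Order.TTheory GRing.Theory Num.Theory.
Local Open Scope ring_scope.
Local Open Scope classical_set_scope.

(* Each summand of the objective is a nonnegative multiple of [expR] applied
   to [-2 (i_b - 1) t_b], which is affine in [i] for fixed [t] and in [t] for
   fixed [i]; hence both partial functions are convex.  The constraint
   function [sum_b i_b^2 t_b] is likewise convex in [i] (as [t >= 0]) and
   affine in [t], so every section of [S] is a sublevel set of a convex
   function restricted to a box, hence convex. *)

Section ConvexCalculus.
Context {R : realType} {n : nat}.
Implicit Types (C D : set ('I_n -> R)) (g : ('I_n -> R) -> R).

Definition affine_fun g : Prop :=
  forall l x y, g (ccomb l x y) = l * g x + (1 - l) * g y.

Lemma affine_fun_coord (p : R -> R) (b : 'I_n) :
  (forall l u v, p (l * u + (1 - l) * v) = l * p u + (1 - l) * p v) ->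
  affine_fun (fun x => p (x b)).
Proof. by move=> ap l x y; exact: ap. Qed.

Lemma convex_set_n_lbound (c : R) :
  convex_set_n [set x : 'I_n -> R | forall b, c <= x b].
Proof.
move=> x y cx cy l l0 l1 b; rewrite /ccomb.
have l1' : 0 <= 1 - l by rewrite subr_ge0.
by have := ler_wpM2l l0 (cx b); have := ler_wpM2l l1' (cy b); lra.
Qed.

Lemma convex_set_n_sublevel {C D g} {E : R} :
  convex_set_n C -> convex_fun_on C g ->
  (forall x, D x <-> C x /\ g x <= E) -> convex_set_n D.
Proof.
move=> cC cg DE x y /DE[Cx gx] /DE[Cy gy] l l0 l1; apply/DE.
split; first exact: cC.
have l1' : 0 <= 1 - l by rewrite subr_ge0.
apply: le_trans (cg _ _ Cx Cy _ l0 l1) _.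
by have := ler_wpM2l l0 gx; have := ler_wpM2l l1' gy; lra.
Qed.

Lemma convex_fun_on_sum (I : Type) (r : seq I) C (F : I -> ('I_n -> R) -> R) :
  (forall j, convex_fun_on C (F j)) ->
  convex_fun_on C (fun x => \sum_(j <- r) F j x).
Proof.
move=> cF x y Cx Cy l l0 l1.
rewrite !mulr_sumr -big_split /=; apply: ler_sum => j _; exact: cF.
Qed.

Lemma convex_fun_on_affine C g : affine_fun g -> convex_fun_on C g.
Proof. by move=> ag x y _ _ l _ _; rewrite ag. Qed.

Lemma convex_fun_on_expR_affine C g (c : R) :
  0 <= c -> affine_fun g -> convex_fun_on C (fun x => c * expR (g x)).
Proof.
move=> c0 ag x y _ _ l l0 l1; rewrite ag.
have -> : l * (c * expR (g x)) + (1 - l) * (c * expR (g y))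
          = c * (l * expR (g x) + (1 - l) * expR (g y)) by ring.
apply: (ler_wpM2l c0).
by have := @convex_expR R (Itv01 l0 l1) (g x) (g y); rewrite /conv.
Qed.

Lemma convex_fun_on_sqr_coord C (b : 'I_n) (t : R) :
  0 <= t -> convex_fun_on C (fun x => x b ^+ 2 * t).
Proof.
move=> t0 x y _ _ l l0 l1; rewrite /ccomb -subr_ge0.
have -> : l * (x b ^+ 2 * t) + (1 - l) * (y b ^+ 2 * t)
          - (l * x b + (1 - l) * y b) ^+ 2 * t
        = l * (1 - l) * (x b - y b) ^+ 2 * t by ring.
by rewrite mulr_ge0 // mulr_ge0 ?sqr_ge0 // mulr_ge0 // subr_ge0.
Qed.

End ConvexCalculus.

Theorem theorem1 (R : realType) (B : nat) (E eps : R) :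
  (1 <= B)%N -> 0 < E -> 0 < eps ->
  biconvex_problem
    [set i : 'I_B -> R | forall b, 1 + eps <= i b]
    [set t : 'I_B -> R | forall b, 0 <= t b]
    [set p : ('I_B -> R) * ('I_B -> R) |
       (forall b, 1 + eps <= p.1 b) /\ (forall b, 0 <= p.2 b) /\
       \sum_(b < B) (p.1 b) ^+ 2 * p.2 b <= E]
    (fun i t => \sum_(b < B) (4 : R) ^+ b * expR (- 2 * (i b - 1) * t b)).
Proof.
move=> _ _ _.
split; [|split; [|split; [split|]]].
- by split; [exists (fun _ => 1 + eps) | exact: convex_set_n_lbound].
- by split; [exists (fun _ => 0) | exact: convex_set_n_lbound].
- by move=> p [? []].
- split=> [i Xi | t Yt].
  + apply: (convex_set_n_sublevel (convex_set_n_lbound 0)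
      (g := fun t => \sum_(b < B) i b ^+ 2 * t b) (E := E)).
      apply: convex_fun_on_sum => b; apply: convex_fun_on_affine.
      by apply: (affine_fun_coord (fun u => i b ^+ 2 * u)) => l u v; ring.
    by move=> t; split=> [[Yt [_ [_ gE]]] | [Yt gE]]; do !split.
  + apply: (convex_set_n_sublevel (convex_set_n_lbound (1 + eps))
      (g := fun i => \sum_(b < B) i b ^+ 2 * t b) (E := E)).
      by apply: convex_fun_on_sum => b; apply: convex_fun_on_sqr_coord.
    by move=> i; split=> [[Xi [_ [_ gE]]] | [Xi gE]]; do !split.
- split=> [i _ | t _]; apply: convex_fun_on_sum => b.
  + apply: (convex_fun_on_expR_affine _ (fun t => - 2 * (i b - 1) * t b)).
      exact: exprn_ge0.
    by apply: (affine_fun_coord (fun u => - 2 * (i b - 1) * u)) => l u v; ring.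
  + apply: (convex_fun_on_expR_affine _ (fun i => - 2 * (i b - 1) * t b)).
      exact: exprn_ge0.
    by apply: (affine_fun_coord (fun u => - 2 * (u - 1) * t b)) => l u v; ring.
Qed.
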